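(* Let $K$ be an oriented virtual knot diagram. Let $m(K)$ be the diagram obtained from $K$ by switching all real crossings, and let $r(K)$ be $K$ with its orientation reversed. Then $$F_{m(K)}(t,s)=-F_K(t^{-1},s^{-1})\quad\text{and}\quad F_{r(K)}(t,s)=F_K(t^{-1},s).$$ Here $F_K(t^{-1},s^{-1})$ denotes the element obtained from $F_K(t,s)$ by replacing each basis element $t^{[p(s)]}$ by $t^{[-p(s^{-1})]}$. Likewise $F_K(t^{-1},s)$ is obtained by replacing $t^{[p(s)]}$ by $t^{[-p(s)]}$.
   Context: The Gauss diagram $G(K)$ of an oriented virtual knot diagram $K$ is built as follows. Take a counterclockwise-oriented circle. For each real crossing, join its two preimages by a chord directed from over- to undercrossing, labeled with the writhe $w(c)=\pm1$. Put $w(K)=\sum_c w(c)$. Let $d$ be a chord intersecting a chord $c$ (endpoints interleave). We say $d$ crosses $c$ from left to right if, viewing $c$ along its direction, the tail of $d$ lies on the left and its head on the right; right to left is the opposite. Let $r_1,\dots,r_n$ be the chords crossing $c$ from left to right and $l_1,\dots,l_m$ those crossing from right to left. Then $\mathrm{Ind}(c)=\sum_i w(r_i)-\sum_j w(l_j)$. Put $N=|\mathrm{Ind}(c)|$ and let $\phi$ be reduction mod $N$ into $\{0,\dots,N-1\}$ if $N\ge1$, and the identity if $N=0$. Define $$g_c(s)=\sum_i w(r_i)s^{\phi(\mathrm{Ind}(r_i))}-\sum_j w(l_j)s^{\phi(-\mathrm{Ind}(l_j))}.$$ Call Laurent polynomials $p,q\in\mathbb{Z}[s,s^{-1}]$ equivalent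 if $p(1)=q(1)$ and $p\equiv q\pmod{s^{|p(1)|}-1}$. Write $t^{[p]}$ for the corresponding basis element of the free abelian group on equivalence classes. Then $$F_K(t,s)=\sum_c w(c)\,t^{[g_c(s)]}-w(K)\,t^{[0]},$$ summing over all real crossings. *)

From HB Require Import structures.
From mathcomp Require Import all_boot all_order all_algebra.
From mathcomp Require Import boolp.
Set Implicit Arguments. Unset Strict Implicit. Unset Printing Implicit Defensive.
Import Order.TTheory GRing.Theory Num.Theory.
Local Open Scope ring_scope.

(* A Laurent polynomial is given as a formal sum of terms (c, e) meaning
   c * s^e (c, e : int).  Two lists denote the same Laurent polynomial
   iff they agree after multiplication by a large power of s. *)
Definition lpoly := seq (int * int).

(* s^M * p, as an honest polynomial (valid when all e + M >= 0) *)
Definition lshift (M : nat) (p : lpoly) : {poly int} :=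
  \sum_(t <- p) t.1 *: 'X^(absz (t.2 + M%:Z)).
Definition lp_ok (M : nat) (p : lpoly) : bool :=
  all (fun t : int * int => 0 <= t.2 + M%:Z) p.

(* p = q (mod s^k - 1) in Z[s,s^-1] = Z[s][1/s]:
   s^M (p - q) = H (s^k - 1) for some polynomial H and some M
   clearing all denominators. *)
Definition lcong (k : nat) (p q : lpoly) : Prop :=
  exists M : nat, exists H : {poly int},
    [&& lp_ok M p & lp_ok M q] /\ lshift M p - lshift M q = H * ('X^k - 1).

Definition lp_at1 (p : lpoly) : int := \sum_(t <- p) t.1.

Definition lequiv (p q : lpoly) : Prop :=
  lp_at1 p = lp_at1 q /\ lcong (absz (lp_at1 p)) p q.

(* A formal sum  sum_i a_i t^[p_i]  is a list of pairs (a_i, p_i);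
   its coefficient on the class of q is the sum of the a_i with p_i ~ q. *)
Definition fsum := seq (int * lpoly).
Definition fcoef (L : fsum) (q : lpoly) : int :=
  \sum_(x <- L) (if `[< lequiv x.2 q >] then x.1 else 0).
Definition feq (L1 L2 : fsum) : Prop := forall q, fcoef L1 q = fcoef L2 q.
Definition fneg (L : fsum) : fsum := [seq (- x.1, x.2) | x <- L].
Definition fmap (f : lpoly -> lpoly) (L : fsum) : fsum :=
  [seq (x.1, f x.2) | x <- L].
Definition inv_ts (p : lpoly) : lpoly := [seq (- t.1, - t.2) | t <- p].
Definition inv_t (p : lpoly) : lpoly := [seq (- t.1, t.2) | t <- p].

(* n chords indexed by 'I_n; endpoints are points of the counterclockwise
   oriented circle, encoded by integers (increasing = counterclockwise);
   chord c goes from tl c (over) to hd c (under); pos c <-> w(c) = +1. *)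
Record gauss (n : nat) := Gauss {
  tl : 'I_n -> int;
  hd : 'I_n -> int;
  pos : 'I_n -> bool }.

Definition wf_gauss n (G : gauss n) : Prop :=
  injective (tl G) /\ injective (hd G) /\ forall i j, tl G i <> hd G j.

Section GaussDefs.
Variables (n : nat) (G : gauss n).

Definition wr (c : 'I_n) : int := if pos G c then 1 else -1.
Definition writhe : int := \sum_(c < n) wr c.

(* x lies on the right of chord c (viewed from its tail towards its head):
   the counterclockwise open arc from tl c to hd c *)
Definition rightof (c : 'I_n) (x : int) : bool :=
  if tl G c < hd G c then (tl G c < x) && (x < hd G c)
  else (tl G c < x) || (x < hd G c).

Definition crossLR (c d : 'I_n) : bool :=
  [&& d != c, ~~ rightof c (tl G d) & rightof c (hd G d)].
Definition crossRL (c d : 'I_n) : bool :=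
  [&& d != c, rightof c (tl G d) & ~~ rightof c (hd G d)].

Definition Ind (c : 'I_n) : int :=
  \sum_(d < n | crossLR c d) wr d - \sum_(d < n | crossRL c d) wr d.

Definition phi (N : nat) (e : int) : int :=
  if N == 0%N then e else (e %% N%:Z)%Z.

Definition gpoly (c : 'I_n) : lpoly :=
  let N := absz (Ind c) in
  [seq (wr d, phi N (Ind d)) | d <- enum 'I_n & crossLR c d] ++
  [seq (- wr d, phi N (- Ind d)) | d <- enum 'I_n & crossRL c d].

Definition Finv : fsum :=
  [seq (wr c, gpoly c) | c <- enum 'I_n] ++ [:: (- writhe, [::])].

End GaussDefs.

(* m(K): all crossings switched: chords reversed, signs changed *)
Definition mirror n (G : gauss n) : gauss n :=
  Gauss (hd G) (tl G) (fun c => ~~ pos G c).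
(* r(K): orientation reversed: same chords and signs on the reflected circle *)
Definition reverse n (G : gauss n) : gauss n :=
  Gauss (fun c => - tl G c) (fun c => - hd G c) (pos G).

From Pilot Require Import Defs.
From HB Require Import structures.
From mathcomp Require Import all_boot all_order all_algebra.
From mathcomp Require Import boolp.
From mathcomp Require Import zify ring.
Import Order.TTheory GRing.Theory Num.Theory.
Local Open Scope ring_scope.
(* Re-import so that [lshift] means Defs.lshift, not fintype.lshift. *)
Import Defs.
Set Implicit Arguments. Unset Strict Implicit.

(* Mirroring reverses every chord and negates every writhe; since the sides
   of a chord are exchanged as well, the chords crossing c from left to right
   are the same, so every index changes sign and g_c(s) becomes -g_c(s^-1) up
   to reducing exponents modulo |Ind c|.  Reversing the orientation reflects
   the circle, which exchanges the left-to-right and right-to-left crossings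
   while keeping the writhes; again every index changes sign and g_c(s)
   becomes exactly -g_c(s), up to reordering its terms. *)

Lemma lshift_nil M : lshift M [::] = 0.
Proof. by rewrite /lshift big_nil. Qed.

Lemma lshift_cons M (t : int * int) (p : lpoly) :
  lshift M (t :: p) = t.1 *: 'X^(absz (t.2 + M%:Z)) + lshift M p.
Proof. by rewrite /lshift big_cons. Qed.

Lemma lshift_cat M (p q : lpoly) : lshift M (p ++ q) = lshift M p + lshift M q.
Proof. by rewrite /lshift big_cat. Qed.

Lemma lp_ok_cat M (p q : lpoly) : lp_ok M (p ++ q) = lp_ok M p && lp_ok M q.
Proof. exact: all_cat. Qed.

Lemma lshiftD M j p : lp_ok M p -> lshift (M + j) p = lshift M p * 'X^j.
Proof.
elim: p => [|t p IH] /=; first by rewrite !lshift_nil mul0r.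
move=> /andP[t_ok p_ok]; rewrite !lshift_cons IH // mulrDl -scalerAl -exprD.
by have -> : absz (t.2 + (M + j)%N%:Z) = addn (absz (t.2 + M%:Z)) j by lia.
Qed.

Lemma lp_ok_leq M M' p : (M <= M')%N -> lp_ok M p -> lp_ok M' p.
Proof.
move=> leMM'; elim: p => [|t p IH] //= /andP[t_ok p_ok].
by rewrite IH // andbT; lia.
Qed.

Lemma lp_ok_exists p : exists M, lp_ok M p.
Proof.
elim: p => [|t p [M p_ok]]; first by exists 0%N.
exists (M + absz t.2)%N => /=; rewrite (lp_ok_leq _ p_ok) ?leq_addr // andbT.
lia.
Qed.

Section LaurentCongruence.
Variable k : nat.

Lemma lcong_refl p : lcong k p p.
Proof.
have [M p_ok] := lp_ok_exists p.
by exists M, 0; rewrite p_ok subrr mul0r.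
Qed.

Lemma lcong_sym p q : lcong k p q -> lcong k q p.
Proof.
move=> [M [H [/andP[p_ok q_ok] e]]]; exists M, (- H).
by rewrite p_ok q_ok mulNr -e opprB.
Qed.

Lemma lcong_trans p q r : lcong k p q -> lcong k q r -> lcong k p r.
Proof.
move=> [M1 [H1 [/andP[p_ok q_ok] e1]]] [M2 [H2 [/andP[q_ok' r_ok] e2]]].
exists (M1 + M2)%N, (H1 * 'X^M2 + H2 * 'X^M1).
rewrite (lp_ok_leq _ p_ok) ?leq_addr // (lp_ok_leq _ r_ok) ?leq_addl //.
split=> //; rewrite -[lshift _ p](subrK (lshift (M1 + M2) q)) -addrA.
by rewrite [in X in _ + X]addnC !lshiftD // -mulrBl -mulrBl e1 e2; ring.
Qed.

Lemma lcong_cat p q p' q' :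
  lcong k p q -> lcong k p' q' -> lcong k (p ++ p') (q ++ q').
Proof.
move=> [M1 [H1 [/andP[p_ok q_ok] e1]]] [M2 [H2 [/andP[p'_ok q'_ok] e2]]].
exists (M1 + M2)%N, (H1 * 'X^M2 + H2 * 'X^M1).
rewrite !lp_ok_cat (lp_ok_leq _ p_ok) ?leq_addr // (lp_ok_leq _ q_ok) ?leq_addr //.
rewrite (lp_ok_leq _ p'_ok) ?leq_addl // (lp_ok_leq _ q'_ok) ?leq_addl //.
split=> //; rewrite !lshift_cat [in lshift _ p']addnC [in lshift _ q']addnC.
rewrite !lshiftD //; transitivity
  ((lshift M1 p - lshift M1 q) * 'X^M2 + (lshift M2 p' - lshift M2 q') * 'X^M1).
  by ring.
by rewrite e1 e2; ring.
Qed.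

Lemma lcong_monomial_shift (c e : int) (j : nat) :
  lcong k [:: (c, e)] [:: (c, e + (j * k)%N%:Z)].
Proof.
(* s^(jk) - 1 = (s^k - 1) (1 + s^k + ... + s^((j-1)k)) *)
set a := absz (e + (absz e)%:Z).
exists (absz e), (- (c%:P * 'X^a * \sum_(i < j) ('X^k) ^+ i)).
split; first by rewrite /lp_ok /= !andbT; apply/andP; split; lia.
rewrite !lshift_cons !lshift_nil /= !addr0.
have -> : absz (e + (j * k)%N%:Z + (absz e)%:Z) = addn a (k * j) by rewrite /a; lia.
by rewrite exprD exprM -!mul_polyC -[('X^k) ^+ j](subrK 1) subrX1; ring.
Qed.

Lemma lcong_monomial_modz (c a b : int) :
  (a %% k%:Z = b %% k%:Z)%Z -> lcong k [:: (c, a)] [:: (c, b)].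
Proof.
move=> eq_mod; set q := divz b k%:Z - divz a k%:Z.
have eb : b = a + q * k%:Z.
  by rewrite mulrBl {1}(divz_eq b k%:Z) {1}(divz_eq a k%:Z) eq_mod; ring.
have [q_ge0 | q_lt0] := lerP 0 q.
  have -> : b = a + (absz q * k)%N%:Z by lia.
  exact: lcong_monomial_shift.
apply: lcong_sym.
have -> : a = b + (absz q * k)%N%:Z by lia.
exact: lcong_monomial_shift.
Qed.

Lemma lcong_map (T : Type) (s : seq T) (f g : T -> int * int) :
  (forall x, (f x).1 = (g x).1 /\ ((f x).2 %% k%:Z = (g x).2 %% k%:Z)%Z) ->
  lcong k (map f s) (map g s).
Proof.
move=> fg; elim: s => [|x s IH] /=; first exact: lcong_refl.
apply: (@lcong_cat [:: f x] [:: g x]) IH.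
by case: (fg x); case: (f x) => c a; case: (g x) => c' b /= <-; apply: lcong_monomial_modz.
Qed.

End LaurentCongruence.

Lemma lequiv_sym p q : lequiv p q -> lequiv q p.
Proof. by move=> [e pq]; split; rewrite -e //; apply: lcong_sym. Qed.

Lemma lequiv_trans p q r : lequiv p q -> lequiv q r -> lequiv p r.
Proof.
move=> [e1 pq] [e2 qr]; split; first by rewrite e1.
by apply: lcong_trans pq _; rewrite e1.
Qed.

Lemma lequiv_perm p q : perm_eq p q -> lequiv p q.
Proof.
move=> pq; split; first by rewrite /lp_at1 (perm_big _ pq).
have [M p_ok] := lp_ok_exists p; exists M, 0.
by rewrite /lp_ok -(perm_all _ pq) -/(lp_ok M p) p_ok /lshift (perm_big _ pq) subrr mul0r.
Qed.

Lemma lp_at1_inv_ts p : lp_at1 (inv_ts p) = - lp_at1 p.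
Proof. by rewrite /lp_at1 big_map sumrN. Qed.

Lemma fcoef_cat L1 L2 q : fcoef (L1 ++ L2) q = fcoef L1 q + fcoef L2 q.
Proof. by rewrite /fcoef big_cat. Qed.

Lemma feq_cat L1 L2 L1' L2' : feq L1 L1' -> feq L2 L2' -> feq (L1 ++ L2) (L1' ++ L2').
Proof. by move=> e1 e2 q; rewrite !fcoef_cat e1 e2. Qed.

Lemma feq_map (T : Type) (s : seq T) (f g : T -> int * lpoly) :
  (forall x, (f x).1 = (g x).1 /\ lequiv (f x).2 (g x).2) -> feq (map f s) (map g s).
Proof.
move=> fg q; rewrite /fcoef !big_map; apply: eq_bigr => x _.
have [-> fxgx] := fg x; congr (if _ then _ else _); apply: asbool_equiv_eq.
by split; [apply: lequiv_trans; apply: lequiv_sym | apply: lequiv_trans].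
Qed.

Lemma rightof_mirror n (G : gauss n) c x :
  tl G c <> hd G c -> x <> tl G c -> x <> hd G c ->
  rightof (mirror G) c x = ~~ rightof G c x.
Proof.
move=> tl_hd x_tl x_hd; rewrite /rightof /=.
by case: ifP => A; case: ifP => B; apply/idP/idP; lia.
Qed.

Lemma rightof_reverse n (G : gauss n) c x :
  tl G c <> hd G c -> x <> - tl G c -> x <> - hd G c ->
  rightof (reverse G) c x = ~~ rightof G c (- x).
Proof.
move=> tl_hd x_tl x_hd; rewrite /rightof /=.
by case: ifP => A; case: ifP => B; apply/idP/idP; lia.
Qed.

Lemma lp_at1_gpoly n (G : gauss n) c : lp_at1 (gpoly G c) = Ind G c.
Proof.
by rewrite /lp_at1 /gpoly big_cat !big_map !big_filter sumrN !big_enum_cond.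
Qed.

Lemma phiE N e : phi N e = (e %% N%:Z)%Z.
Proof. by rewrite /phi; case: eqP => // ->; rewrite modz0. Qed.

Section Symmetries.
Variables (n : nat) (G : gauss n).
Hypothesis wfG : wf_gauss G.

Lemma endpoints_distinct c d : d != c ->
  [/\ tl G d <> tl G c, hd G d <> hd G c, tl G d <> hd G c,
      hd G d <> tl G c & tl G c <> hd G c].
Proof.
case: wfG => tl_inj [hd_inj tl_hd] /eqP ne; split=> // e.
- exact/ne/tl_inj.
- exact/ne/hd_inj.
- by apply: (tl_hd c d); rewrite e.
Qed.

Lemma crossLR_mirror c d : crossLR (mirror G) c d = crossLR G c d.
Proof.
rewrite /crossLR; case: (eqVneq d c) => [->|ne] //=.
have [? ? ? ? ?] := endpoints_distinct ne.
by rewrite !rightof_mirror // negbK andbC.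
Qed.

Lemma crossRL_mirror c d : crossRL (mirror G) c d = crossRL G c d.
Proof.
rewrite /crossRL; case: (eqVneq d c) => [->|ne] //=.
have [? ? ? ? ?] := endpoints_distinct ne.
by rewrite !rightof_mirror // negbK andbC.
Qed.

Lemma crossLR_reverse c d : crossLR (reverse G) c d = crossRL G c d.
Proof.
rewrite /crossLR /crossRL; case: (eqVneq d c) => [->|ne] //=.
have [? ? ? ? ?] := endpoints_distinct ne.
by rewrite !rightof_reverse ?opprK ?negbK //; lia.
Qed.

Lemma crossRL_reverse c d : crossRL (reverse G) c d = crossLR G c d.
Proof.
rewrite /crossLR /crossRL; case: (eqVneq d c) => [->|ne] //=.
have [? ? ? ? ?] := endpoints_distinct ne.
by rewrite !rightof_reverse ?opprK ?negbK //; lia.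
Qed.

Lemma wr_mirror c : wr (mirror G) c = - wr G c.
Proof. by rewrite /wr /=; case: (pos G c); rewrite ?opprK. Qed.

Lemma writhe_mirror : writhe (mirror G) = - writhe G.
Proof. by rewrite /writhe (eq_bigr _ (fun d _ => wr_mirror d)) sumrN. Qed.

Lemma Ind_mirror c : Ind (mirror G) c = - Ind G c.
Proof.
rewrite /Ind (eq_bigl _ _ (crossLR_mirror c)) (eq_bigl _ _ (crossRL_mirror c)).
by rewrite !(eq_bigr _ (fun d _ => wr_mirror d)) !sumrN opprB addrC opprK.
Qed.

Lemma Ind_reverse c : Ind (reverse G) c = - Ind G c.
Proof.
rewrite /Ind (eq_bigl _ _ (crossLR_reverse c)) (eq_bigl _ _ (crossRL_reverse c)).
by rewrite opprB.
Qed.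

Lemma gpoly_mirror c : lequiv (gpoly (mirror G) c) (inv_ts (gpoly G c)).
Proof.
split; first by rewrite lp_at1_inv_ts !lp_at1_gpoly Ind_mirror.
rewrite lp_at1_gpoly Ind_mirror abszN /gpoly /inv_ts map_cat -!map_comp.
rewrite (eq_filter (crossLR_mirror c)) (eq_filter (crossRL_mirror c)).
apply: lcong_cat; apply: lcong_map => d /=.
all: rewrite wr_mirror !Ind_mirror abszN !phiE ?opprK; split=> //.
- by rewrite modz_mod modzNm.
- by rewrite modzNm opprK modz_mod.
Qed.

Lemma gpoly_reverse c : perm_eq (gpoly (reverse G) c) (inv_t (gpoly G c)).
Proof.
rewrite /gpoly /inv_t Ind_reverse abszN map_cat -!map_comp perm_catC.
rewrite (eq_filter (crossLR_reverse c)) (eq_filter (crossRL_reverse c)).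
apply: (eq_ind_r (fun s => perm_eq s _) (perm_refl _)).
by congr (_ ++ _); apply: eq_map => d /=; rewrite Ind_reverse ?opprK.
Qed.

End Symmetries.

Theorem proposition5p2 (n : nat) (G : gauss n) :
  wf_gauss G ->
  feq (Finv (mirror G)) (fneg (fmap inv_ts (Finv G))) /\
  feq (Finv (reverse G)) (fmap inv_t (Finv G)).
Proof.
move=> wfG; rewrite /Finv /fneg /fmap !map_cat -!map_comp.
split; apply: feq_cat.
- by apply: feq_map => c /=; rewrite wr_mirror; split=> //; apply: gpoly_mirror.
- by move=> q /=; rewrite writhe_mirror opprK.
- by apply: feq_map => c; split=> //; apply/lequiv_perm/gpoly_reverse.
- by move=> q; reflexivity.
Qed.
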